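(* Let $A$ be a uniform algebra, let $\theta : A\to M_n(\mathbb{C})$ be a continuous unital homomorphism, and let $\alpha : A\to A$ be a unital antilinear contraction such that $$\theta_\alpha(f):=\tfrac12\bigl(\theta(f)+\theta(\alpha(f))^*\bigr)$$ satisfies $\|\theta_\alpha\|\le 1$. Then for every $f\in A$, $$W(\theta_\alpha(f))\subset \operatorname{conv}(\sigma(f)).$$
   Context: A uniform algebra is a norm-closed subalgebra of $C(X)$, for $X$ a compact Hausdorff space, containing the constants, with the supremum norm. A map $\alpha$ is antilinear if $\alpha(\lambda f+g)=\overline\lambda\alpha(f)+\alpha(g)$. It is a contraction if $\|\alpha(f)\|\le\|f\|$, and it is unital if $\alpha(1)=1$. $W(T)=\{\langle Tx,x\rangle:\|x\|=1\}$ denotes the numerical range of a matrix $T$. $\sigma(f)$ is the spectrum of $f$ as an element of $A$, and $\operatorname{conv}$ denotes convex hull. *)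

From HB Require Import structures.
From mathcomp Require Import all_boot all_order all_algebra.
From mathcomp Require Import classical_sets reals topology.
From mathcomp Require Import complex.
Set Implicit Arguments. Unset Strict Implicit. Unset Printing Implicit Defensive.
Import Order.TTheory GRing.Theory Num.Theory.
Local Open Scope ring_scope.
Local Open Scope classical_set_scope.

Section Defs.
Variable R : realType.
Local Notation C := R[i].

Definition ccontinuous (X : topologicalType) (f : X -> C) : Prop :=
  forall (x : X) (e : R), 0 < e ->
    nbhs x (fun y => `|f y - f x| < (e%:C)%C).

Definition uniform_algebra (X : topologicalType) (A : set (X -> C)) : Prop :=
  [/\ compact [set: X], hausdorff_space X &
      (forall f, A f -> ccontinuous f)] /\
  [/\
      (forall c : C, A (fun _ => c)),
      (forall (a : C) f g, A f -> A g -> A (fun x => a * f x + g x)),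
      (forall f g, A f -> A g -> A (fun x => f x * g x)) &
      (forall (u : nat -> X -> C) (g : X -> C), (forall k, A (u k)) ->
         (forall e : R, 0 < e -> exists N : nat, forall k, (N <= k)%N ->
            forall x, `|u k x - g x| < (e%:C)%C) ->
         A g)].

Definition supnorm_le (X : Type) (f : X -> C) (c : R) : Prop :=
  forall x, `|f x| <= (c%:C)%C.

Definition vnorm (n : nat) (v : 'cV[C]_n) : C :=
  sqrtC (\sum_i `|v i 0| ^+ 2).

Definition opnorm_le (n : nat) (T : 'M[C]_n) (c : R) : Prop :=
  forall v : 'cV[C]_n, vnorm (T *m v) <= (c%:C)%C * vnorm v.

Definition adjmx (m n : nat) (T : 'M[C]_(m, n)) : 'M[C]_(n, m) :=
  (map_mx Num.conj T)^T.

Definition unital_hom (X : Type) (A : set (X -> C)) (n : nat)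
    (theta : (X -> C) -> 'M[C]_n) : Prop :=
  [/\ (forall (a : C) f g, A f -> A g ->
         theta (fun x => a * f x + g x) = a *: theta f + theta g),
      (forall f g, A f -> A g -> theta (fun x => f x * g x) = theta f *m theta g) &
      theta (fun _ => 1) = 1%:M].

Definition hom_continuous (X : Type) (A : set (X -> C)) (n : nat)
    (theta : (X -> C) -> 'M[C]_n) : Prop :=
  exists K : R, forall f c, A f -> supnorm_le f c -> opnorm_le (theta f) (K * c).

Definition antilinear (X : Type) (A : set (X -> C)) (alpha : (X -> C) -> X -> C) : Prop :=
  forall (a : C) f g, A f -> A g ->
    alpha (fun x => a * f x + g x) = (fun x => a^* * alpha f x + alpha g x).

Definition theta_alpha (X : Type) (n : nat) (theta : (X -> C) -> 'M[C]_n)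
    (alpha : (X -> C) -> X -> C) (f : X -> C) : 'M[C]_n :=
  (2 : C)^-1 *: (theta f + adjmx (theta (alpha f))).

Definition numrange (n : nat) (T : 'M[C]_n) : set C :=
  [set z | exists x : 'cV[C]_n, vnorm x = 1 /\ z = (adjmx x *m (T *m x)) 0 0].

Definition spectrum (X : Type) (A : set (X -> C)) (f : X -> C) : set C :=
  [set l | ~ exists g, A g /\ forall x, (f x - l) * g x = 1].

Definition conv (S : set C) : set C :=
  [set z | exists (m : nat) (w : 'I_m -> R) (s : 'I_m -> C),
     [/\ forall i, 0 <= w i, \sum_i w i = 1, forall i, S (s i) &
         z = \sum_i ((w i)%:C)%C * s i]].

End Defs.

(** The numerical range of theta_alpha f lies in every closed disk D(a, r)
   containing f(X): theta_alpha (f - a) = theta_alpha f - a, and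
   ||f - a|| <= r forces ||theta_alpha (f - a)|| <= r, so |<(T - a) x, x>| <= r
   for unit x.  In the plane, a point z lying in every disk that contains the
   compact set K = f(X) lies in conv K: otherwise a line strictly separates z
   from K, and a huge disk centred far beyond that line contains K but not z.
   For the separation, move z to the origin and rotate a point of K onto the
   positive axis.  Then either K meets the opposite ray (and 0 lies on a
   segment), or K sits in the slit plane, where the tangent t of the half
   argument is continuous.  If its extreme values u >= 0 >= l satisfy
   1 + u l <= 0, the arguments spread over an angle >= pi and 0 is a convex
   combination of three points of K; otherwise a line separates.  Finally
   f(X) is contained in the spectrum of f. *)

From HB Require Import structures.
From mathcomp Require Import all_boot all_order all_algebra.
From mathcomp Require Import classical_sets reals topology.
From mathcomp Require Import complex.
From mathcomp Require Import boolp normedtype derive realfun ring lra.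
Set Implicit Arguments. Unset Strict Implicit. Unset Printing Implicit Defensive.
Import Order.TTheory GRing.Theory Num.Theory.
Import numFieldNormedType.Exports.
Local Open Scope ring_scope.
Local Open Scope classical_set_scope.

Section ContinuousExtrema.
Variables (R : realType) (X : topologicalType).
Hypothesis cX : compact [set: X].

Lemma compact_argmin (h : X -> R) (x0 : X) :
  continuous h -> exists xm, forall x, h xm <= h x.
Proof.
move=> ch; have [c _ Hc] := compact_EVT_min (ex_intro _ x0 I) cX
  (continuous_subspaceT ch).
by exists c => x; apply: Hc; rewrite in_setT.
Qed.

Lemma compact_argmax (h : X -> R) (x0 : X) :
  continuous h -> exists xm, forall x, h x <= h xm.
Proof.
move=> ch; have [c _ Hc] := compact_EVT_max (ex_intro _ x0 I) cX
  (continuous_subspaceT ch).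
by exists c => x; apply: Hc; rewrite in_setT.
Qed.

End ContinuousExtrema.

Lemma continuous_lincomb (R : realType) (X : topologicalType) (a b : R)
    (f g : X -> R) :
  continuous f -> continuous g -> continuous (fun x => a * f x + b * g x).
Proof.
move=> cf cg x.
apply: (continuousD (f := fun y => a * f y) (g := fun y => b * g y)).
  by apply: (continuousM (s := fun=> a) (t := f)); [apply: cst_continuous|apply: cf].
by apply: (continuousM (s := fun=> b) (t := g)); [apply: cst_continuous|apply: cg].
Qed.

Lemma continuous_sum_sqr (R : realType) (X : topologicalType) (f g : X -> R) :
  continuous f -> continuous g -> continuous (fun x => f x ^+ 2 + g x ^+ 2).
Proof.
move=> cf cg x; apply: (continuousD (f := fun y => f y ^+ 2) (g := fun y => g y ^+ 2)).
  by apply: (continuousM (s := f) (t := f)); [apply: cf|apply: cf].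
by apply: (continuousM (s := g) (t := g)); [apply: cg|apply: cg].
Qed.

Section PlanarHull.
Variables (R : realType) (X : Type).

Definition separated_from_origin (px py : X -> R) : Prop :=
  exists vx vy d : R, 0 < d /\ forall x, d <= vx * px x + vy * py x.

Definition origin_in_hull3 (px py : X -> R) : Prop :=
  exists x1 x2 x3 (l1 l2 l3 : R),
    [/\ 0 <= l1, 0 <= l2, 0 <= l3, l1 + l2 + l3 = 1 &
      l1 * px x1 + l2 * px x2 + l3 * px x3 = 0 /\
      l1 * py x1 + l2 * py x2 + l3 * py x3 = 0].

Definition origin_in_covering_disks (px py : X -> R) : Prop :=
  forall ax ay r : R, 0 < r ->
    (forall x, (px x - ax) ^+ 2 + (py x - ay) ^+ 2 <= r ^+ 2) ->
    ax ^+ 2 + ay ^+ 2 <= r ^+ 2.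

Lemma separated_from_origin_rotate (a b : R) (px py : X -> R) :
  separated_from_origin (fun x => a * px x + b * py x)
                        (fun x => a * py x - b * px x) ->
  separated_from_origin px py.
Proof.
move=> [vx [vy [d [d0 sep]]]]; exists (vx * a - vy * b), (vx * b + vy * a), d.
split=> // x; rewrite (_ : _ * px x + _ =
  vx * (a * px x + b * py x) + vy * (a * py x - b * px x)); [exact: sep|ring].
Qed.

Lemma origin_in_hull3_rotate (a b : R) (px py : X -> R) :
  a ^+ 2 + b ^+ 2 != 0 ->
  origin_in_hull3 (fun x => a * px x + b * py x)
                  (fun x => a * py x - b * px x) ->
  origin_in_hull3 px py.
Proof.
move=> nab [x1 [x2 [x3 [l1 [l2 [l3 [l1_ge0 l2_ge0 l3_ge0 l_sum [gx0 gy0]]]]]]]].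
exists x1, x2, x3, l1, l2, l3; split => //.
set P := l1 * px x1 + _ + _ in gx0 gy0 *; set Q := l1 * py x1 + _ + _ in gx0 gy0 *.
have {}gx0 : a * P + b * Q = 0 by rewrite -gx0 /P /Q; ring.
have {}gy0 : a * Q - b * P = 0 by rewrite -gy0 /P /Q; ring.
have PE : (a ^+ 2 + b ^+ 2) * P = a * (a * P + b * Q) - b * (a * Q - b * P).
  by ring.
have QE : (a ^+ 2 + b ^+ 2) * Q = b * (a * P + b * Q) + a * (a * Q - b * P).
  by ring.
rewrite gx0 gy0 !mulr0 subr0 addr0 in PE QE.
by move: PE QE => /eqP + /eqP; rewrite !mulf_eq0 (negPf nab) => /eqP -> /eqP.
Qed.

Lemma origin_in_hull3_segment (px py : X -> R) (x0 z : X) :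
  0 < px x0 -> py x0 = 0 -> py z = 0 -> px z <= 0 -> origin_in_hull3 px py.
Proof.
move=> px0 py0 pyz pxz; have D0 : 0 < px x0 - px z by lra.
exists x0, z, z, (- px z / (px x0 - px z)), (px x0 / (px x0 - px z)), 0.
split; rewrite ?mul0r ?addr0 ?py0 ?pyz ?mulr0 ?addr0 //.
- by rewrite divr_ge0 //; lra.
- by rewrite divr_ge0 //; lra.
- by field; rewrite gt_eqF.
- by split=> //; field; rewrite gt_eqF.
Qed.

End PlanarHull.

Section HalfAngle.
Variable R : realType.

(* For p + iq off the closed negative real half-axis, with argument theta in
   (-pi, pi), [half_angle_scale p q] is |p + iq| + p and [half_angle_tan p q]
   is tan (theta / 2). *)
Definition half_angle_scale (p q : R) : R := Num.sqrt (p ^+ 2 + q ^+ 2) + p.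

Definition half_angle_tan (p q : R) : R := q / half_angle_scale p q.

Let sqr_sqrt_sum_sqr (p q : R) :
  Num.sqrt (p ^+ 2 + q ^+ 2) ^+ 2 = p ^+ 2 + q ^+ 2.
Proof. by rewrite sqr_sqrtr // addr_ge0 // sqr_ge0. Qed.

Lemma half_angle_scale_gt0 (p q : R) : (q = 0 -> 0 < p) -> 0 < half_angle_scale p q.
Proof.
move=> slit; rewrite /half_angle_scale.
have := sqrtr_ge0 (p ^+ 2 + q ^+ 2); have := sqr_sqrt_sum_sqr p q.
have [q0|q_neq0] := eqVneq q 0; first by have := slit q0; lra.
have : 0 < q ^+ 2 by rewrite exprn_even_gt0.
nra.
Qed.

Lemma half_angle_param (p q : R) : (q = 0 -> 0 < p) ->
  let s := half_angle_scale p q in let t := half_angle_tan p q in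
  p = s / 2 * (1 - t ^+ 2) /\ q = s * t.
Proof.
move=> /half_angle_scale_gt0 s_gt0 s t; rewrite /t /half_angle_tan -/s.
split; last by field; rewrite gt_eqF.
have sE : s ^+ 2 - q ^+ 2 = 2 * s * p.
  by rewrite /s /half_angle_scale sqrrD sqr_sqrt_sum_sqr; ring.
rewrite (_ : s / 2 * (1 - (q / s) ^+ 2) = (s ^+ 2 - q ^+ 2) / (2 * s)).
  by rewrite sE; field; rewrite gt_eqF.
by field; rewrite gt_eqF.
Qed.

End HalfAngle.

Section SlitPlane.
Variables (R : realType) (X : topologicalType).
Hypothesis cX : compact [set: X].
Variables (px py : X -> R) (x0 : X).
Hypotheses (cpx : continuous px) (cpy : continuous py).
Hypotheses (py_x0 : py x0 = 0) (slit : forall x, py x = 0 -> 0 < px x).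

Let s x := half_angle_scale (px x) (py x).
Let t x := half_angle_tan (px x) (py x).

Let s_gt0 x : 0 < s x.
Proof. exact/half_angle_scale_gt0/slit. Qed.

Let pxE x : px x = s x / 2 * (1 - t x ^+ 2).
Proof. by have [] := half_angle_param (@slit x). Qed.

Let pyE x : py x = s x * t x.
Proof. by have [] := half_angle_param (@slit x). Qed.

Let t_x0 : t x0 = 0.
Proof. by rewrite /t /half_angle_tan py_x0 mul0r. Qed.

Let continuous_t : continuous t.
Proof.
have cs : continuous s.
  move=> x.
  apply: (continuousD (f := fun y => Num.sqrt (px y ^+ 2 + py y ^+ 2)) (g := px)).
    apply: (continuous_comp (f := fun y => px y ^+ 2 + py y ^+ 2)).
      exact: continuous_sum_sqr.
    exact: sqrt_continuous.
  exact: cpx.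
move=> x; apply: (continuousM (s := py) (t := fun y => (s y)^-1)); first exact: cpy.
by apply: continuousV; [rewrite gt_eqF|apply: cs].
Qed.

Let hull3_of_wide_angle xu xl :
  0 < t xu -> 1 + t xu * t xl <= 0 -> origin_in_hull3 px py.
Proof.
set u := t xu; set l := t xl => u_gt0 wide.
have l_lt0 : l < 0 by nra.
have s0 := s_gt0 x0; have su := s_gt0 xu; have sl := s_gt0 xl.
pose m0 := 2 * ((l - u) * (1 + u * l)) / s x0.
pose mu := 2 * (- l) / s xu.
pose ml := 2 * u / s xl.
have m0_ge0 : 0 <= m0.
  by apply: divr_ge0 (ltW s0); rewrite mulr_ge0 // mulr_le0 //; lra.
have mu_ge0 : 0 <= mu by rewrite divr_ge0 ?ltW //; lra.
have ml_gt0 : 0 < ml by rewrite divr_gt0 //; lra.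
pose S := m0 + mu + ml; have S_gt0 : 0 < S by rewrite /S; lra.
exists x0, xu, xl, (m0 / S), (mu / S), (ml / S); split.
- by rewrite divr_ge0 // ltW.
- by rewrite divr_ge0 // ltW.
- by rewrite divr_ge0 // ltW.
- by rewrite -!mulrDl divff // gt_eqF.
by split; rewrite ?pxE ?pyE t_x0 -/u -/l /m0 /mu /ml; field; rewrite !gt_eqF.
Qed.

Let separated_of_narrow_angle l u : l <= 0 -> 0 <= u -> 0 < 1 + l * u ->
  (forall x, l <= t x <= u) -> separated_from_origin px py.
Proof.
move=> l_le0 u_ge0 narrow t_bound.
(* Any r with u < r < -1/l makes (t + 1/r) (r - t) positive on [l, u]. *)
pose e := (1 + l * u) / (2 * (1 - l)).
have e_gt0 : 0 < e by rewrite /e divr_gt0 //; lra.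
pose r := u + e; have r_gt0 : 0 < r by rewrite /r; lra.
have lr_gt0 : 0 < l + 1 / r.
  have -> : l + 1 / r = (1 + l * u) * (2 - l) / (2 * (1 - l) * r).
    by rewrite /r /e; field; rewrite !gt_eqF //; nra.
  by rewrite divr_gt0 // mulr_gt0 //; lra.
pose h x := 1 * px x + (r - 1 / r) / 2 * py x.
have h_gt0 x : 0 < h x.
  have -> : h x = s x / 2 * ((t x + 1 / r) * (r - t x)).
    by rewrite /h pxE pyE; field; rewrite gt_eqF.
  have /andP[lt tu] := t_bound x.
  by rewrite mulr_gt0 ?divr_gt0 // mulr_gt0 //; rewrite /r; lra.
have [xm hm] := compact_argmin cX x0
  (continuous_lincomb (a := 1) (b := (r - 1 / r) / 2) cpx cpy).
by exists 1, ((r - 1 / r) / 2), (h xm).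
Qed.

Lemma origin_in_hull3_slit :
  ~ separated_from_origin px py -> origin_in_hull3 px py.
Proof.
move=> not_sep.
have [xu t_le] := compact_argmax cX x0 continuous_t.
have [xl t_ge] := compact_argmin cX x0 continuous_t.
have u_ge0 : 0 <= t xu by rewrite -t_x0 t_le.
have l_le0 : t xl <= 0 by rewrite -t_x0 t_ge.
have [wide|narrow] := lerP (1 + t xu * t xl) 0.
  apply: (hull3_of_wide_angle _ wide); rewrite lt_neqAle u_ge0 andbT.
  by apply: contraTneq wide => <-; rewrite mul0r addr0 ler10.
exfalso; apply: not_sep; apply: (separated_of_narrow_angle l_le0 u_ge0).
  by rewrite mulrC.
by move=> x; rewrite t_le t_ge.
Qed.

End SlitPlane.

Section CompactPlanarSet.
Variables (R : realType) (X : topologicalType).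
Hypothesis cX : compact [set: X].
Variables (px py : X -> R).
Hypotheses (cpx : continuous px) (cpy : continuous py).

Lemma origin_in_hull3_of_not_separated :
  ~ separated_from_origin px py -> origin_in_hull3 px py.
Proof.
move=> not_sep.
have [x0 _] : exists x0 : X, True.
  apply/not_existsP => empty; apply: not_sep; exists 0, 0, 1.
  by split=> // x; have := empty x.
pose a := px x0; pose b := py x0.
have [ab0|ab_neq0] := eqVneq (a ^+ 2 + b ^+ 2) 0.
  have [a0 b0] : a = 0 /\ b = 0 by split; apply/eqP; rewrite -sqrf_eq0; nra.
  by exists x0, x0, x0, 1, 0, 0; split; rewrite -/a -/b ?a0 ?b0; lra.
pose gx x := a * px x + b * py x; pose gy x := a * py x - b * px x.
apply: (origin_in_hull3_rotate ab_neq0); rewrite -/gx -/gy.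
have gx_x0 : 0 < gx x0.
  by rewrite /gx -/a -/b lt_def -!expr2 ab_neq0 addr_ge0 ?sqr_ge0.
have gy_x0 : gy x0 = 0 by rewrite /gy -/a -/b mulrC subrr.
have [[z [gyz gxz]]|no_ray] := pselect (exists z, gy z = 0 /\ gx z <= 0).
  exact: origin_in_hull3_segment gx_x0 gy_x0 gyz gxz.
apply: (origin_in_hull3_slit cX _ _ gy_x0).
- exact: continuous_lincomb.
- rewrite (_ : gy = fun x => a * py x + (- b) * px x); first exact: continuous_lincomb.
  by apply: funext => x; rewrite mulNr.
- by move=> x gyx; rewrite ltNge; apply/negP => gxx; apply: no_ray; exists x.
- by move=> sep; apply: not_sep; apply: separated_from_origin_rotate sep.
Qed.

Lemma not_separated_of_covering_disks :
  origin_in_covering_disks px py -> ~ separated_from_origin px py.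
Proof.
move=> disks [vx [vy [d [d_gt0 sep]]]].
have [[x0 _]|empty] := pselect (exists x : X, True); last first.
  have : 1 ^+ 2 + 0 ^+ 2 <= (1 / 2) ^+ 2 :> R.
    by apply: disks => [|x]; [lra|case: empty; exists x].
  lra.
have [xm q_le] := compact_argmax cX x0 (continuous_sum_sqr cpx cpy).
pose B := px xm ^+ 2 + py xm ^+ 2; have B_ge0 : 0 <= B by rewrite addr_ge0 ?sqr_ge0.
(* The disk centred at T v of radius (T^2 |v|^2 - 1)^(1/2) covers the set but
   not the origin. *)
pose T := (B + 1) / d; have T_gt0 : 0 < T by rewrite divr_gt0 //; lra.
have Td : T * d = B + 1 by rewrite /T; field; rewrite gt_eqF.
pose V := vx ^+ 2 + vy ^+ 2.
have dist_le x : (px x - T * vx) ^+ 2 + (py x - T * vy) ^+ 2 <= T ^+ 2 * V - 2.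
  have : T * d <= T * (vx * px x + vy * py x) by rewrite ler_pM2l.
  have := q_le x; rewrite Td /V -/B; nra.
have TV : 2 <= T ^+ 2 * V.
  have := dist_le x0; have := sqr_ge0 (px x0 - T * vx).
  by have := sqr_ge0 (py x0 - T * vy); lra.
pose r := Num.sqrt (T ^+ 2 * V - 1).
have r2 : r ^+ 2 = T ^+ 2 * V - 1 by rewrite /r sqr_sqrtr //; lra.
have r_gt0 : 0 < r by rewrite /r sqrtr_gt0; lra.
have := disks (T * vx) (T * vy) r r_gt0; rewrite r2.
have /[swap]/[apply] :
    forall x, (px x - T * vx) ^+ 2 + (py x - T * vy) ^+ 2 <= T ^+ 2 * V - 1.
  by move=> x; have := dist_le x; lra.
rewrite /V; lra.
Qed.
End CompactPlanarSet.

Section ComplexPlane.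
Variable R : realType.
Local Notation C := R[i].

Lemma complex_ReIm (w : C) : w = (complex.Re w +i* complex.Im w)%C.
Proof. by case: w. Qed.

Lemma normc_le (w : C) (r : R) : 0 <= r ->
  (`|w| <= r%:C%C) = (complex.Re w ^+ 2 + complex.Im w ^+ 2 <= r ^+ 2).
Proof.
move=> r_ge0; rewrite normc_def lecR -[in LHS](ger0_norm r_ge0) -sqrtr_sqr.
by rewrite ler_sqrt // sqr_ge0.
Qed.

Lemma normc_ge_Im (w : C) : (`|complex.Im w|%:C <= `|w|)%C.
Proof.
by rewrite normc_def lecR -sqrtr_sqr ler_sqrt ?lerDr ?sqr_ge0 ?addr_ge0 ?sqr_ge0.
Qed.

Lemma ccontinuous_Re (X : topologicalType) (g : X -> C) :
  ccontinuous g -> continuous (fun y => complex.Re (g y)).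
Proof.
move=> cg y; apply/cvgrPdist_lt => e e_gt0; apply: filterS (cg y e e_gt0) => w.
by rewrite -raddfB distrC -ltcR; apply/le_lt_trans/normc_ge_Re.
Qed.

Lemma ccontinuous_Im (X : topologicalType) (g : X -> C) :
  ccontinuous g -> continuous (fun y => complex.Im (g y)).
Proof.
move=> cg y; apply/cvgrPdist_lt => e e_gt0; apply: filterS (cg y e e_gt0) => w.
by rewrite -raddfB distrC -ltcR; apply/le_lt_trans/normc_ge_Im.
Qed.

Lemma ccontinuous_subr (X : topologicalType) (g : X -> C) (z : C) :
  ccontinuous g -> ccontinuous (fun y => g y - z).
Proof.
by move=> cg y e e_gt0; apply: filterS (cg y e e_gt0) => w; rewrite opprB addrA subrK.
Qed.

Lemma conv_sub (S T : set C) : S `<=` T -> conv S `<=` conv T.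
Proof.
by move=> ST z [m [w [s [w_ge0 w_sum Ss ->]]]]; exists m, w, s; split=> // i; apply: ST.
Qed.

Lemma mem_conv3 (S : set C) (w1 w2 w3 : C) (l1 l2 l3 : R) :
  S w1 -> S w2 -> S w3 -> 0 <= l1 -> 0 <= l2 -> 0 <= l3 -> l1 + l2 + l3 = 1 ->
  conv S (l1%:C * w1 + l2%:C * w2 + l3%:C * w3)%C.
Proof.
move=> Sw1 Sw2 Sw3 l1_ge0 l2_ge0 l3_ge0 l_sum.
exists 3%N, (fun i : 'I_3 => nth 0 [:: l1; l2; l3] i),
  (fun i : 'I_3 => nth 0 [:: w1; w2; w3] i); split.
- by case=> [[|[|[|]]]].
- by rewrite !big_ord_recl big_ord0 /= addr0 addrA.
- by case=> [[|[|[|]]]].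
- by rewrite !big_ord_recl big_ord0 /= addr0 !addrA.
Qed.

Lemma mem_conv_range_of_disks (X : topologicalType) (g : X -> C) (z : C) :
  compact [set: X] -> ccontinuous g ->
  (forall a r, 0 < r -> supnorm_le (fun y => g y - a) r -> `|z - a| <= r%:C%C) ->
  conv (range g) z.
Proof.
move=> cX cg disks.
pose px y := complex.Re (g y - z); pose py y := complex.Im (g y - z).
have cpx : continuous px by apply/ccontinuous_Re/ccontinuous_subr.
have cpy : continuous py by apply/ccontinuous_Im/ccontinuous_subr.
have gE y : g y = z + (px y +i* py y)%C by rewrite -complex_ReIm addrC subrK.
have real_disks : origin_in_covering_disks px py.
  move=> ax ay r r_gt0 cover.
  have : `|z - (z + (ax +i* ay)%C)| <= r%:C%C.
    apply: disks => // y; rewrite gE opprD addrACA subrr add0r.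
    by rewrite (normc_le _ (ltW r_gt0)); apply: cover.
  by rewrite opprD addrA subrr add0r normrN (normc_le _ (ltW r_gt0)).
have [x1 [x2 [x3 [l1 [l2 [l3 [l1_ge0 l2_ge0 l3_ge0 l_sum [px0 py0]]]]]]]] :=
  origin_in_hull3_of_not_separated cX cpx cpy
    (not_separated_of_covering_disks cX cpx cpy real_disks).
have -> : z = (l1%:C * g x1 + l2%:C * g x2 + l3%:C * g x3)%C.
  rewrite !gE [z]complex_ReIm; apply/eqP; rewrite eq_complex /=.
  apply/andP; split; apply/eqP.
    by rewrite -[LHS]addr0 -[in LHS]px0 -[in LHS](mulr1 (complex.Re z)) -l_sum; ring.
  by rewrite -[LHS]addr0 -[in LHS]py0 -[in LHS](mulr1 (complex.Im z)) -l_sum; ring.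
by apply: mem_conv3.
Qed.

End ComplexPlane.

Lemma sumr_mul_le (R : realFieldType) (n : nat) (p q : 'I_n -> R) (r : R) :
  0 < r -> \sum_i p i ^+ 2 = 1 -> \sum_i q i ^+ 2 <= r ^+ 2 ->
  \sum_i p i * q i <= r.
Proof.
move=> r_gt0 p_sum q_sum.
have amgm i : p i * q i <= r / 2 * p i ^+ 2 + (2 * r)^-1 * q i ^+ 2.
  have : 0 <= (r * p i - q i) ^+ 2 / (2 * r) by rewrite divr_ge0 ?sqr_ge0 //; lra.
  have -> : (r * p i - q i) ^+ 2 / (2 * r) =
      r / 2 * p i ^+ 2 + (2 * r)^-1 * q i ^+ 2 - p i * q i.
    by field; rewrite gt_eqF.
  lra.
apply: le_trans (ler_sum _ (fun i _ => amgm i)) _.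
rewrite big_split /= -!mulr_sumr p_sum mulr1.
have : (2 * r)^-1 * \sum_i q i ^+ 2 <= (2 * r)^-1 * r ^+ 2.
  by rewrite ler_pM2l // invr_gt0; lra.
have -> : (2 * r)^-1 * r ^+ 2 = r / 2 by field; rewrite gt_eqF.
lra.
Qed.

Section NumericalRange.
Variables (R : realType) (n : nat).
Local Notation C := R[i].
Implicit Types (x y : 'cV[C]_n) (T : 'M[C]_n).

Lemma adjmx_mulmx00 x y : (adjmx x *m y) 0 0 = \sum_i (x i 0)^* * y i 0.
Proof. by rewrite !mxE; apply: eq_bigr => i _; rewrite !mxE. Qed.

Lemma vnorm_ge0 x : 0 <= vnorm x.
Proof. by rewrite /vnorm sqrtC_ge0 sumr_ge0 // => i _; rewrite exprn_ge0. Qed.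

Lemma vnorm_sqr x : vnorm x ^+ 2 = \sum_i `|x i 0| ^+ 2.
Proof. exact: sqrtCK. Qed.

Lemma adjmx_mulmx_self00 x : (adjmx x *m x) 0 0 = vnorm x ^+ 2.
Proof. by rewrite adjmx_mulmx00 vnorm_sqr; apply: eq_bigr => i _; rewrite normCK mulrC. Qed.

Lemma numrange_shift T x (a : C) : vnorm x = 1 ->
  (adjmx x *m ((T - a *: 1%:M) *m x)) 0 0 = (adjmx x *m (T *m x)) 0 0 - a.
Proof.
move=> x_unit; rewrite mulmxBl mulmxBr -scalemxAl mul1mx -scalemxAr.
by rewrite -[a in RHS]mulr1 -(expr1n _ 2) -x_unit -adjmx_mulmx_self00 !mxE.
Qed.

Lemma numrange_norm_le T x (r : R) : 0 < r -> vnorm x = 1 -> opnorm_le T r ->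
  `|(adjmx x *m (T *m x)) 0 0| <= r%:C%C.
Proof.
move=> r_gt0 x_unit T_le; set y := T *m x.
pose p i := complex.Re `|x i 0|; pose q i := complex.Re `|y i 0|.
have sqr_sumE (v : 'cV[C]_n) :
    (\sum_i complex.Re `|v i 0| ^+ 2)%:C%C = vnorm v ^+ 2.
  rewrite rmorph_sum vnorm_sqr; apply: eq_bigr => i _.
  by rewrite rmorphXn -[in RHS](RRe_real (normr_real (v i 0))).
have p_sum : \sum_i p i ^+ 2 = 1.
  by apply: (@complexI R); rewrite sqr_sumE x_unit expr1n.
have q_sum : \sum_i q i ^+ 2 <= r ^+ 2.
  rewrite -lecR sqr_sumE rmorphXn /=.
  have := T_le x; rewrite x_unit mulr1 => y_le.
  by rewrite !expr2 ler_pM ?vnorm_ge0.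
rewrite adjmx_mulmx00; apply: le_trans (ler_norm_sum _ _ _) _.
have -> : \sum_i `|(x i 0)^* * y i 0| = (\sum_i p i * q i)%:C%C.
  rewrite rmorph_sum; apply: eq_bigr => i _.
  rewrite normrM norm_conjC rmorphM.
  rewrite -[in LHS](RRe_real (normr_real (x i 0))).
  by rewrite -[in LHS](RRe_real (normr_real (y i 0))).
by rewrite lecR sumr_mul_le.
Qed.

End NumericalRange.

Lemma adjmx_scale1D (R : realType) (n : nat) (c : R[i]) (M : 'M[R[i]]_n) :
  adjmx (c *: 1%:M + M) = c^* *: 1%:M + adjmx M.
Proof.
by apply/matrixP => i j; rewrite !mxE rmorphD rmorphM /= eq_sym conjC_nat.
Qed.

Section ThetaAlpha.
Variables (R : realType) (X : Type) (A : set (X -> R[i])) (n : nat).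
Variables (theta : (X -> R[i]) -> 'M[R[i]]_n) (alpha : (X -> R[i]) -> X -> R[i]).
Hypothesis A_cst : forall c, A (fun _ => c).
Hypothesis A_lincomb : forall a f g, A f -> A g -> A (fun x => a * f x + g x).
Hypothesis theta_hom : unital_hom A theta.
Hypothesis A_alpha : forall f, A f -> A (alpha f).
Hypothesis alpha_anti : antilinear A alpha.
Hypothesis alpha1 : alpha (fun _ => 1) = (fun _ => 1).
Hypothesis theta_alpha_contr :
  forall f c, A f -> supnorm_le f c -> opnorm_le (theta_alpha theta alpha f) c.

Lemma theta_alpha_subr f a : A f ->
  theta_alpha theta alpha (fun y => f y - a) = theta_alpha theta alpha f - a *: 1%:M.
Proof.
move=> Af; have Aaf := A_alpha Af; have A1 := A_cst 1.
have [theta_lin _ theta1] := theta_hom.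
rewrite (_ : (fun y => f y - a) = fun y => - a * (fun=> 1) y + f y); last first.
  by apply: funext => y; rewrite mulr1 addrC.
rewrite /theta_alpha alpha_anti // alpha1 !theta_lin // theta1.
rewrite adjmx_scale1D conjCK.
apply/matrixP => i j; rewrite !mxE.
by case: (i == j); rewrite /=; field.
Qed.

Lemma numrange_theta_alpha_disk f z a r : A f ->
  numrange (theta_alpha theta alpha f) z -> 0 < r ->
  supnorm_le (fun y => f y - a) r -> `|z - a| <= r%:C%C.
Proof.
move=> Af [x [x_unit ->]] r_gt0 f_a.
have Afa : A (fun y => f y - a).
  rewrite (_ : (fun y => f y - a) = fun y => 1 * f y + (fun=> - a) y).
    exact: A_lincomb.
  by apply: funext => y; rewrite mul1r.
rewrite -numrange_shift // -theta_alpha_subr //.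
exact: numrange_norm_le (theta_alpha_contr Afa f_a).
Qed.

End ThetaAlpha.

Lemma range_sub_spectrum (R : realType) (X : Type) (A : set (X -> R[i]))
    (f : X -> R[i]) :
  range f `<=` spectrum A f.
Proof.
move=> _ [x _ <-] [g [_ fg]]; have := fg x.
by rewrite subrr mul0r => /eqP; rewrite eq_sym oner_eq0.
Qed.

Theorem lemma5p2 (R : realType) (X : topologicalType) (A : set (X -> R[i]))
  (n : nat) (theta : (X -> R[i]) -> 'M[R[i]]_n) (alpha : (X -> R[i]) -> X -> R[i]) :
  uniform_algebra A ->
  unital_hom A theta -> hom_continuous A theta ->
  (forall f, A f -> A (alpha f)) ->
  antilinear A alpha ->
  alpha (fun _ => 1) = (fun _ => 1) ->
  (forall f c, A f -> supnorm_le f c -> supnorm_le (alpha f) c) ->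
  (forall f c, A f -> supnorm_le f c -> opnorm_le (theta_alpha theta alpha f) c) ->
  forall f, A f -> numrange (theta_alpha theta alpha f) `<=` conv (spectrum A f).
Proof.
move=> [[cX _ A_cont] [A_cst A_lincomb _ _]] theta_hom _ A_alpha alpha_anti alpha1 _
  theta_alpha_contr f Af z Wz.
apply: (conv_sub (@range_sub_spectrum _ _ A f)).
apply: (mem_conv_range_of_disks cX (A_cont f Af)) => a r r_gt0 f_a.
exact: (numrange_theta_alpha_disk A_cst A_lincomb theta_hom A_alpha alpha_anti alpha1
  theta_alpha_contr Af Wz r_gt0 f_a).
Qed.
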